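(* Let $\mathcal G$ be a braided stability groupoid and $F\colon U\mathcal G\to\mathrm{Set}$ a functor. Then for all $p,n$ there is an isomorphism $(\Sigma^pF)_n\cong G_n\times_{G_{n-p}}F_{n-p}$. Under these isomorphisms, for a morphism $\eta=hG_{p-q}\in\mathrm{Hom}(q,p)$ (with $h\in G_p$) the corresponding map $(\Sigma^pF)_n\to(\Sigma^qF)_n$ is $[g,x]\mapsto[g(\mathrm{id}_{n-p}\oplus h),F(\mathrm{id}_{n-p}\oplus\iota_{p-q})(x)]$, and this map is independent of the choice of $h$ representing $\eta$.
   Context: Stability groupoid: a monoidal groupoid $(\mathcal G,\oplus,0)$ with objects $(\mathbb N,+,0)$, $G_n=\mathrm{Aut}(n)$, with $\oplus\colon G_m\times G_n\to G_{m+n}$ injective, $G_0$ trivial, $(G_{l+m}\times1)\cap(1\times G_{m+n})=1\times G_m\times1$ in $G_{l+m+n}$; braided: equipped with a braiding $b_{m,n}\in G_{m+n}$. $U\mathcal G$: objects $\mathbb N$, $\mathrm{Hom}(m,n)=G_n/G_{n-m}$ for $m\le n$ ($G_{n-m}\subset G_n$ via $g\mapsto g\oplus\mathrm{id}_m$), empty otherwise, composition $fG_l\circ gG_m=f(\mathrm{id}_l\oplus g)G_{l+m}$, monoidal via $f_1G_{m_1}\oplus f_2G_{m_2}=(f_1\oplus f_2)(\mathrm{id}_{m_1}\oplus b^{-1}_{n_1,m_2}\oplus\mathrm{id}_{n_2})G_{m_1+m_2}$; $0$ initial with $\iota_n\colon 0\to n$. Write $F_n=F(n)$. For an object $X$,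 $\Sigma_X$ is the left adjoint of the functor $F\mapsto F(-\oplus X)$ on functors $U\mathcal G\to\mathrm{Set}$ (left Kan extension along $-\oplus X$); concretely $(\Sigma_XF)(B)=\mathrm{colim}_{(A,\psi\colon A\oplus X\to B)}F(A)$ over the comma category $(-\oplus X\downarrow B)$. A morphism $\eta\colon X\to Y$ induces $\Sigma_YF\to\Sigma_XF$ via the functor $(-\oplus Y\downarrow B)\to(-\oplus X\downarrow B)$, $(A,\psi)\mapsto(A,\psi\circ(\mathrm{id}_A\oplus\eta))$. Write $\Sigma=\Sigma_1$, so $\Sigma^p\cong\Sigma_p$. $G_n\times_{G_{n-p}}F_{n-p}$ is the quotient of $G_n\times F_{n-p}$ by $(gh,x)\sim(g,F(h)x)$ for $h\in G_{n-p}$, where $G_{n-p}\subset G_n$ via $h\mapsto h\oplus\mathrm{id}_p$; $[g,x]$ denotes a class. *)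

From HB Require Import structures.
From mathcomp Require Import all_boot.
From mathcomp Require Import zify.
From Stdlib Require Export Relations.

Set Implicit Arguments.
Unset Strict Implicit.
Unset Printing Implicit Defensive.

Record grp := Grp {
  gcar :> Type;
  gmul : gcar -> gcar -> gcar;
  gone : gcar;
  ginv : gcar -> gcar;
  gmulA : forall x y z, gmul x (gmul y z) = gmul (gmul x y) z;
  gmul1g : forall x, gmul gone x = x;
  gmulVg : forall x, gmul (ginv x) x = gone }.
Arguments gmul {g}.
Arguments gone {g}.
Arguments ginv {g}.
Notation "x *g y" := (gmul x y) (at level 40, left associativity).

Definition tr (P : nat -> Type) {m n : nat} (e : m = n) (x : P m) : P n :=
  eq_rect m P x n e.
Arguments tr P {m n} e x.

(* Braided stability groupoid: strict monoidal groupoid with objects    *)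
(* (N,+,0), G n = Aut(n), (+) on morphisms given by [op].               *)
Record bsgroupoid := BSGroupoid {
  G : nat -> grp;
  op : forall m n, G m -> G n -> G (m + n);
  op_mul : forall m n (a a' : G m) (b b' : G n),
     op (a *g a') (b *g b') = op a b *g op a' b';
  op_assoc : forall l m n (a : G l) (b : G m) (c : G n),
     tr (fun k => G k) (addnA l m n) (op a (op b c)) = op (op a b) c;
  op_unitl : forall n (g : G n),
     tr (fun k => G k) (add0n n) (op (@gone (G 0)) g) = g;
  op_unitr : forall n (g : G n),
     tr (fun k => G k) (addn0 n) (op g (@gone (G 0))) = g;
  op_inj : forall m n (a a' : G m) (b b' : G n),
     op a b = op a' b' -> a = a' /\ b = b';
  G0_trivial : forall g : G 0, g = gone;
  op_cap : forall l m n (x : G (l + m + n)),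
     ((exists a : G (l + m), x = op a (@gone (G n))) /\
      (exists c : G (m + n), x = tr (fun k => G k) (addnA l m n) (op (@gone (G l)) c)))
     <-> (exists b : G m, x = op (op (@gone (G l)) b) (@gone (G n)));
  (* braiding b_{m,n} : m (+) n -> n (+) m, an element of G (m+n) *)
  braid : forall m n, G (m + n);
  braid_nat : forall m n (g : G m) (h : G n),
     braid m n *g op g h = tr (fun k => G k) (addnC n m) (op h g) *g braid m n;
  braid_hex1 : forall l m n (e1 : m + (l + n) = l + (m + n)) (e2 : l + m + n = l + (m + n)),
     braid l (m + n) =
       tr (fun k => G k) e1 (op (@gone (G m)) (braid l n))
       *g tr (fun k => G k) e2 (op (braid l m) (@gone (G n)));
  braid_hex2 : forall l m n (e1 : l + n + m = l + m + n) (e2 : l + (m + n) = l + m + n),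
     braid (l + m) n =
       tr (fun k => G k) e1 (op (braid l n) (@gone (G m)))
       *g tr (fun k => G k) e2 (op (@gone (G l)) (braid m n)) }.

Section Derived.
Variable S : bsgroupoid.

Definition one (n : nat) : G S n := @gone (G S n).

Definition opx (m n k : nat) (e : m + n = k) (a : G S m) (b : G S n) : G S k :=
  tr (fun j => G S j) e (op a b).

Definition incl (m n : nat) (H : m <= n) (h : G S (n - m)) : G S n :=
  opx (subnK H) h (one m).

(* equality in Hom_{UG}(m,n) = G_n / G_{n-m} of two representatives *)
Definition homeq (m n : nat) (H : m <= n) (f g : G S n) : Prop :=
  exists h : G S (n - m), g = f *g incl H h.

(* composition in UG: f : m -> n (f in G_n), g : l -> m (g in G_m);
   f G_{n-m} o g G_{m-l} = f (id_{n-m} (+) g) *)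
Definition comp (m n : nat) (H : m <= n) (f : G S n) (g : G S m) : G S n :=
  f *g opx (subnK H) (one (n - m)) g.

Lemma UGop_eq a1 c1 a2 c2 k :
  a1 <= c1 -> a2 <= c2 -> c1 + c2 = k -> c1 - a1 + (a1 + (c2 - a2) + a2) = k.
Proof. move=> H1 H2 e; lia. Qed.

(* monoidal product in UG of f1 : a1 -> c1 and f2 : a2 -> c2 (target c1+c2 = k):
   (f1 (+) f2) (id_{m1} (+) b^{-1}_{a1,m2} (+) id_{a2}),  m_i = c_i - a_i *)
Definition UGop (a1 c1 a2 c2 k : nat) (H1 : a1 <= c1) (H2 : a2 <= c2)
    (e : c1 + c2 = k) (f1 : G S c1) (f2 : G S c2) : G S k :=
  opx e f1 f2 *g
  opx (UGop_eq H1 H2 e) (one (c1 - a1))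
      (opx (erefl (a1 + (c2 - a2) + a2)) (ginv (braid S a1 (c2 - a2))) (one a2)).

End Derived.

(* Functors UG -> Set, given on representatives f in G_n of classes in  *)
(* Hom(m,n) = G_n/G_{n-m} (m <= n).                                     *)
Record ufunctor (S : bsgroupoid) := UFunctor {
  Fob : nat -> Type;
  Fmap : forall m n, m <= n -> G S n -> Fob m -> Fob n;
  Fmap_wd : forall m n (H : m <= n) (f : G S n) (h : G S (n - m)) x,
     Fmap H (f *g incl H h) x = Fmap H f x;
  Fmap_id : forall n (H : n <= n) x, Fmap H (one S n) x = x;
  Fmap_comp : forall l m n (Hlm : l <= m) (Hmn : m <= n) (Hln : l <= n)
     (f : G S n) (g : G S m) x,
     Fmap Hln (comp Hmn f g) x = Fmap Hmn f (Fmap Hlm g x) }.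

Section Sigma.
Variables (S : bsgroupoid) (F : ufunctor S).

(* objects of the comma category (- (+) X | n), together with an element of F(A):
   representatives of elements of (Sigma_X F)_n *)
Record sobj (X n : nat) := SObj {
  so_A : nat;
  so_le : so_A + X <= n;
  so_psi : G S n;            (* psi : A (+) X -> n *)
  so_x : Fob F so_A }.

(* (A,psi,x) -> (A',psi',F(alpha)x) for alpha : (A,psi) -> (A',psi'),
   i.e. psi' o (alpha (+) id_X) = psi in Hom(A+X,n) *)
Definition sstep (X n : nat) (u v : sobj X n) : Prop :=
  exists (H : so_A u <= so_A v) (alpha : G S (so_A v)),
    so_x v = Fmap H alpha (so_x u) /\
    homeq (so_le u) (so_psi u)
      (comp (so_le v) (so_psi v)
         (UGop H (leqnn X) (erefl (so_A v + X)) alpha (one S X))).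

(* (Sigma_X F)_n = colimit: representatives modulo the generated equivalence *)
Definition colim_eq (X n : nat) : relation (sobj X n) :=
  clos_refl_sym_trans (sobj X n) (@sstep X n).

Lemma leq_sigma (A X Y n : nat) : X <= Y -> A + Y <= n -> A + X <= n.
Proof. move=> H1 H2; lia. Qed.

(* the map (Sigma_Y F)_n -> (Sigma_X F)_n induced by eta : X -> Y,
   (A,psi) |-> (A, psi o (id_A (+) eta)) *)
Definition sigma_map (X Y n : nat) (HXY : X <= Y) (eta : G S Y)
    (u : sobj Y n) : sobj X n :=
  @SObj X n (so_A u) (leq_sigma HXY (so_le u))
    (comp (so_le u) (so_psi u)
       (UGop (leqnn (so_A u)) HXY (erefl (so_A u + Y)) (one S (so_A u)) eta))
    (so_x u).

(* G_n x_{G_{n-p}} F_{n-p} : representatives and (gh,x) ~ (g,F(h)x) *)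
Definition pobj (p n : nat) := (G S n * Fob F (n - p))%type.

Definition pstep (p n : nat) (H : p <= n) (u v : pobj p n) : Prop :=
  exists h : G S (n - p),
    u.1 = v.1 *g incl H h /\ v.2 = Fmap (leqnn (n - p)) h u.2.

Definition pequiv (p n : nat) (H : p <= n) : relation (pobj p n) :=
  clos_refl_sym_trans (pobj p n) (@pstep p n H).

Lemma emap_eq (q p n : nat) : q <= p -> p <= n -> n - p + (p - q) = n - q.
Proof. move=> H1 H2; lia. Qed.

(* [g,x] |-> [g (id_{n-p} (+) h), F(id_{n-p} (+) iota_{p-q})(x)] *)
Definition emap (q p n : nat) (Hqp : q <= p) (Hpn : p <= n) (h : G S p)
    (u : pobj p n) : pobj q n :=
  (u.1 *g opx (subnK Hpn) (one S (n - p)) h,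
   Fmap (leq_sub2l n Hqp)
     (UGop (leqnn (n - p)) (leq0n (p - q)) (emap_eq Hqp Hpn)
        (one S (n - p)) (one S (p - q)))
     u.2).

End Sigma.

Definition setoid_iso (A B : Type) (RA : relation A) (RB : relation B) (f : A -> B) : Prop :=
  (forall x y, RA x y -> RB (f x) (f y)) /\
  (forall x y, RB (f x) (f y) -> RA x y) /\
  (forall z, exists x, RB (f x) z).

(** Every object (A, psi) of the comma category (- (+) p | n) maps to
    (n - p, psi) by the class of the identity in
    Hom(A, n - p) = G_(n - p) / G_(n - p - A), and the morphisms between
    objects of the form (n - p, g) are exactly the elements h of G_(n - p), acting by
    g |-> g (h (+) id_p).  Hence the colimit defining (Sigma^p F)_n is the
    quotient of G_n x F_(n - p) by (g (h (+) id_p), x) ~ (g, F(h) x).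
    Under this identification, precomposing psi with id_A (+) eta for
    eta = h G_(p - q) produces psi (id (+) h) times the UG-morphism
    id_(n - p) (+) iota_(p - q), which is the inverse braiding
    b^-1_(n - p, p - q); naturality of the braiding then moves a change
    k in G_(p - q) of the representative h into G_(n - q), where F
    absorbs it. *)

From Pilot Require Import Defs.
From mathcomp Require Import all_boot.
From mathcomp Require Import zify.
From Stdlib Require Import Eqdep_dec PeanoNat.

Set Implicit Arguments.
Unset Strict Implicit.
Unset Printing Implicit Defensive.

Section GroupTheory.
Variable g : grp.
Implicit Types x y z : g.

Lemma mulgV x : x *g ginv x = gone.
Proof.
have <- : ginv (ginv x) *g ginv x = gone by apply: gmulVg.
rewrite -{1}(gmul1g (x *g ginv x)) -(gmulVg (ginv x)).
by rewrite -gmulA (gmulA (ginv x)) gmulVg gmul1g.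
Qed.

Lemma mulg1 x : x *g gone = x.
Proof. by rewrite -(gmulVg x) gmulA mulgV gmul1g. Qed.

Lemma mulKg x y : ginv x *g (x *g y) = y.
Proof. by rewrite gmulA gmulVg gmul1g. Qed.

Lemma mulgK x y : (y *g x) *g ginv x = y.
Proof. by rewrite -gmulA mulgV mulg1. Qed.

Lemma mulgI x y z : x *g y = x *g z -> y = z.
Proof. by move=> exy; rewrite -(mulKg x y) exy mulKg. Qed.

Lemma idempotent_eq1 x : x *g x = x -> x = gone.
Proof. by move=> xx; apply: (@mulgI x); rewrite xx mulg1. Qed.

Lemma invg1 : ginv (@gone g) = gone.
Proof. by rewrite -{2}(gmulVg gone) mulg1. Qed.

End GroupTheory.

Lemma clos_rst_map (A B : Type) (RA : relation A) (RB : relation B) (f : A -> B) :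
  (forall x y, RA x y -> clos_refl_sym_trans B RB (f x) (f y)) ->
  forall x y, clos_refl_sym_trans A RA x y -> clos_refl_sym_trans B RB (f x) (f y).
Proof.
move=> fR x y; elim=> {x y} [x y /fR //|x|x y _ IH|x y z _ IH1 _ IH2].
- exact: rst_refl.
- exact: rst_sym.
- exact: rst_trans IH1 IH2.
Qed.

Lemma setoid_iso_retraction (A B : Type) (RA : relation A) (RB : relation B)
    (f : A -> B) (r : B -> A) :
  (forall x y, RA x y -> RB (f x) (f y)) ->
  (forall x y, RB x y -> clos_refl_sym_trans A RA (r x) (r y)) ->
  cancel f r ->
  (forall z, clos_refl_sym_trans B RB (f (r z)) z) ->
  setoid_iso (clos_refl_sym_trans A RA) (clos_refl_sym_trans B RB) f.
Proof.
move=> fR rR fK frz; split; last split.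
- by apply: clos_rst_map => x y /fR; apply: rst_step.
- by move=> x y /(clos_rst_map rR); rewrite !fK.
- by move=> z; exists (r z).
Qed.

Section Transport.
Variable S : bsgroupoid.
Notation GG := (G S).
Notation one := (Defs.one S).

(* Elements of G_m and G_k with m = k only propositionally are compared
   through the dependent pair (m, a); equality of such pairs is Leibniz
   equality after transport since nat has decidable equality. *)
Definition tagG m (a : GG m) : {k : nat & GG k} := existT _ m a.

Lemma tagG_inj m (a b : GG m) : tagG a = tagG b -> a = b.
Proof. exact: inj_pair2_eq_dec _ Nat.eq_dec _ _ _ _. Qed.

Lemma tagG_tr m k (e : m = k) (a : GG m) : tagG (tr (fun j => GG j) e a) = tagG a.
Proof. by case: k / e. Qed.

Lemma tagG_trP m k (a : GG m) (b : GG k) :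
  tagG a = tagG b -> exists e : m = k, b = tr (fun j => GG j) e a.
Proof.
move=> eab; have e : m = k by exact: (f_equal (@projT1 _ _) eab).
by subst k; exists erefl; apply: tagG_inj; rewrite eab.
Qed.

Lemma tagG_op m n m' n' (a : GG m) (b : GG n) (a' : GG m') (b' : GG n') :
  tagG a = tagG a' -> tagG b = tagG b' -> tagG (op a b) = tagG (op a' b').
Proof. by move=> /tagG_trP [e1 ->] /tagG_trP [e2 ->]; destruct e1, e2. Qed.

Lemma tagG_mul m k (a b : GG m) (a' b' : GG k) :
  tagG a = tagG a' -> tagG b = tagG b' -> tagG (a *g b) = tagG (a' *g b').
Proof.
move=> /tagG_trP [e1 ->] /tagG_trP [e2 ->]; destruct e1.
by rewrite (eq_irrelevance e2 erefl).
Qed.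

Lemma tagG_inv m k (a : GG m) (a' : GG k) :
  tagG a = tagG a' -> tagG (ginv a) = tagG (ginv a').
Proof. by move=> /tagG_trP [e ->]; destruct e. Qed.

Lemma tagG_one m k : m = k -> tagG (one m) = tagG (one k).
Proof. by move=> ->. Qed.

Lemma tr_one m k (e : m = k) : tr (fun j => GG j) e (one m) = one k.
Proof. by case: k / e. Qed.

Lemma tr_mul m k (e : m = k) (a b : GG m) :
  tr (fun j => GG j) e (a *g b) = tr (fun j => GG j) e a *g tr (fun j => GG j) e b.
Proof. by case: k / e. Qed.

Lemma tagG_opx m n k (e : m + n = k) (a : GG m) (b : GG n) : tagG (opx e a b) = tagG (op a b).
Proof. exact: tagG_tr. Qed.

Lemma tagG_opA l m n (a : GG l) (b : GG m) (c : GG n) :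
  tagG (op a (op b c)) = tagG (op (op a b) c).
Proof. by rewrite -(op_assoc a b c) tagG_tr. Qed.

Lemma tagG_op0l j n (z : GG j) (b : GG n) : j = 0 -> tagG (op z b) = tagG b.
Proof. by move=> ej; subst j; rewrite (G0_trivial z) -{2}(op_unitl b) tagG_tr. Qed.

Lemma tagG_op0r j n (z : GG j) (b : GG n) : j = 0 -> tagG (op b z) = tagG b.
Proof. by move=> ej; subst j; rewrite (G0_trivial z) -{2}(op_unitr b) tagG_tr. Qed.

Lemma op_one m n : op (one m) (one n) = one (m + n).
Proof. by apply: idempotent_eq1; rewrite -op_mul /Defs.one !gmul1g. Qed.

Lemma opx_one m n k (e : m + n = k) : opx e (one m) (one n) = one k.
Proof. by rewrite /opx op_one tr_one. Qed.

Lemma opx_mul m n k (e : m + n = k) (a a' : GG m) (b b' : GG n) :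
  opx e (a *g a') (b *g b') = opx e a b *g opx e a' b'.
Proof. by rewrite /opx op_mul tr_mul. Qed.

Lemma incl_mul m n (H : m <= n) (a b : GG (n - m)) : incl H (a *g b) = incl H a *g incl H b.
Proof. by rewrite /incl -opx_mul /Defs.one gmul1g. Qed.

Lemma incl_one m n (H : m <= n) : incl H (one (n - m)) = one n.
Proof. exact: opx_one. Qed.

Lemma incl_inv m n (H : m <= n) (a : GG (n - m)) : incl H (ginv a) = ginv (incl H a).
Proof. by apply: (@mulgI _ (incl H a)); rewrite mulgV -incl_mul mulgV incl_one. Qed.

(* Hexagon axiom with m = n = 0, after the unit laws. *)
Lemma braid_eq1 a j : j = 0 -> braid S a j = one (a + j).
Proof.
move=> ->; have hex : braid S a 0 = _ := @braid_hex1 S a 0 0 (ltac:(lia)) (ltac:(lia)).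
apply: idempotent_eq1; symmetry; rewrite {1}hex; congr (_ *g _); apply: tagG_inj.
  by rewrite tagG_tr tagG_op0l.
by rewrite tagG_tr tagG_op0r.
Qed.

Lemma tagG_braid m m' j j' : m = m' -> j = j' -> tagG (braid S m j) = tagG (braid S m' j').
Proof. by move=> -> ->. Qed.

Lemma op_mul_braidV m n (a : GG m) (b : GG n) :
  op a b *g ginv (braid S m n) = ginv (braid S m n) *g tr (fun j => GG j) (addnC n m) (op b a).
Proof.
apply: (@mulgI _ (braid S m n)).
by rewrite gmulA braid_nat mulgK gmulA mulgV gmul1g.
Qed.

(* With no new strands on the second factor the braid correction is trivial. *)
Lemma UGop_id_r a1 c1 a2 c2 k (H1 : a1 <= c1) (H2 : a2 <= c2) (e : c1 + c2 = k)
    (f1 : GG c1) (f2 : GG c2) :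
  a2 = c2 -> UGop H1 H2 e f1 f2 = opx e f1 f2.
Proof.
move=> ea; rewrite /UGop braid_eq1; last by lia.
by rewrite invg1 -/(Defs.one S _) !opx_one mulg1.
Qed.

End Transport.

(* The UG-morphism id_a (+) iota_c : a -> a + c is the inverse braiding. *)
Lemma UGop_id_iota S a c k (e : a + c = k) :
  UGop (leqnn a) (leq0n c) e (Defs.one S a) (Defs.one S c)
  = tr (fun j => G S j) e (ginv (braid S a c)).
Proof.
rewrite /UGop opx_one gmul1g; apply: tagG_inj.
rewrite tagG_tr !tagG_opx tagG_op0l; last by lia.
rewrite tagG_opx tagG_op0r //; apply: tagG_inv; apply: tagG_braid => //; lia.
Qed.

Section Sigma.
Variables (S : bsgroupoid) (F : ufunctor S).
Notation GG := (G S).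
Notation one := (Defs.one S).

Lemma addn_leq_sub A p n : A + p <= n -> A <= n - p.
Proof. by move=> h; lia. Qed.

Lemma subnK_leq p n (H : p <= n) : n - p + p <= n.
Proof. by rewrite subnK. Qed.

Definition sobj_of_pobj p n (H : p <= n) (u : pobj F p n) : sobj F p n :=
  @SObj S F p n (n - p) (subnK_leq H) u.1 u.2.

(* (A, psi, x) |-> [psi, F(iota_(n - p - A) (+) id_A) x]. *)
Definition pobj_of_sobj p n (u : sobj F p n) : pobj F p n :=
  (so_psi u, Fmap (addn_leq_sub (so_le u)) (one (n - p)) (so_x u)).

Lemma sobj_of_pobjK p n (H : p <= n) : cancel (sobj_of_pobj H) (@pobj_of_sobj p n).
Proof. by case=> a x; rewrite /pobj_of_sobj /= Fmap_id. Qed.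

Lemma pobj_of_sobjK p n (H : p <= n) (z : sobj F p n) :
  colim_eq (sobj_of_pobj H (pobj_of_sobj z)) z.
Proof.
apply/rst_sym/rst_step; exists (addn_leq_sub (so_le z)), (one (n - p)); split => //=.
by exists (one _); rewrite incl_one mulg1 /Defs.comp UGop_id_r // !opx_one mulg1.
Qed.

Lemma sobj_of_pobj_step p n (H : p <= n) u v :
  pstep H u v -> sstep (sobj_of_pobj H u) (sobj_of_pobj H v).
Proof.
move=> [h [e1 e2]]; exists (leqnn (n - p)), h; split => /=; first by rewrite e2.
exists (one _); rewrite incl_one mulg1 e1 /Defs.comp UGop_id_r //; congr (_ *g _).
by apply: tagG_inj; rewrite /incl !tagG_opx tagG_op0l //; lia.
Qed.

Lemma pobj_of_sobj_step p n (H : p <= n) (u v : sobj F p n) :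
  sstep u v -> pequiv H (pobj_of_sobj u) (pobj_of_sobj v).
Proof.
case: u => A leu psi x; case: v => A' lev psi' x'.
move=> [/= leAA' [alpha [/= ->] [k /= hk]]]; rewrite /pobj_of_sobj /=.
set LA := addn_leq_sub leu; set LA' := addn_leq_sub lev.
set beta := opx (subnK LA') (one (n - p - A')) alpha.
have eA : n - (A + p) = n - p - A by lia.
set kappa := incl LA (tr (fun j => GG j) eA k).
have beta_incl : opx (subnK lev) (one (n - (A' + p))) (opx erefl alpha (one p)) = incl H beta.
  apply: tagG_inj; rewrite /incl !tagG_opx tagG_opA; apply: tagG_op => //.
  by rewrite /beta tagG_opx; apply: tagG_op => //; apply: tagG_one; lia.
have kappa_incl : incl leu k = incl H kappa.
  apply: tagG_inj; rewrite /incl !tagG_opx -(op_one S A p) tagG_opA; apply: tagG_op => //.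
  by rewrite /kappa /incl tagG_opx; apply: tagG_op => //; rewrite tagG_tr.
rewrite /Defs.comp UGop_id_r // beta_incl kappa_incl in hk.
apply: rst_step; exists (beta *g ginv kappa); split => /=.
  by rewrite incl_mul incl_inv gmulA hk mulgK.
rewrite -(Fmap_comp leAA' LA' LA) -(Fmap_comp LA (leqnn _) LA).
by rewrite /Defs.comp gmul1g opx_one mulg1 /kappa -incl_inv Fmap_wd.
Qed.

Lemma emap_sigma_map q p n (Hqp : q <= p) (Hpn : p <= n) (Hqn : q <= n)
    (h : GG p) (u : pobj F p n) :
  colim_eq (sobj_of_pobj Hqn (emap Hqp Hpn h u)) (sigma_map Hqp h (sobj_of_pobj Hpn u)).
Proof.
apply/rst_sym/rst_step; exists (leq_sub2l n Hqp); eexists; split; first by [].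
exists (one _); rewrite incl_one mulg1 /= /Defs.comp UGop_id_r // -!gmulA.
congr (_ *g _); rewrite UGop_id_iota; apply: tagG_inj.
rewrite [RHS]tagG_opx tagG_op0l; last by lia.
rewrite /UGop; apply: tagG_mul; first by rewrite !tagG_opx.
rewrite !tagG_opx tagG_op0l; last by lia.
rewrite tagG_op0l; last by lia.
by rewrite tagG_opx; apply: tagG_op => //; apply: tagG_tr.
Qed.

Lemma emap_homeq q p n (Hqp : q <= p) (Hpn : p <= n) (Hqn : q <= n) (h h' : GG p) :
  homeq Hqp h h' -> forall u : pobj F p n,
  pequiv Hqn (emap Hqp Hpn h u) (emap Hqp Hpn h' u).
Proof.
move=> [k ->] [g x]; set e0 := emap_eq Hqp Hpn.
set w := opx e0 (one (n - p)) k.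
apply/rst_sym/rst_step; exists w; split => /=.
  rewrite -gmulA; congr (_ *g _).
  rewrite -{1}(gmul1g (one (n - p))) opx_mul; congr (_ *g _).
  apply: tagG_inj; rewrite /incl !tagG_opx.
  apply: etrans (tagG_op (erefl _) (tagG_opx _ _ _)) _.
  by rewrite tagG_opA; apply: tagG_op => //; rewrite /w tagG_opx.
set L := leq_sub2l n Hqp.
rewrite -(Fmap_comp L (leqnn _) L) /Defs.comp.
have -> : opx (subnK (leqnn (n - q))) (one (n - q - (n - q)))
   (UGop (leqnn (n - p)) (leq0n (p - q)) e0 (one (n - p)) (one (p - q)))
   = UGop (leqnn (n - p)) (leq0n (p - q)) e0 (one (n - p)) (one (p - q)).
  by apply: tagG_inj; rewrite tagG_opx tagG_op0l //; lia.
rewrite UGop_id_iota.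
have eK : p - q = n - q - (n - p) by lia.
(* naturality of the braiding moves id (+) k across b^-1 into G_(n - q) *)
have -> : w *g tr (fun j => GG j) e0 (ginv (braid S (n - p) (p - q)))
   = tr (fun j => GG j) e0 (ginv (braid S (n - p) (p - q))) *g incl L (tr (fun j => GG j) eK k).
  rewrite /w /opx -tr_mul op_mul_braidV tr_mul; congr (_ *g _).
  by apply: tagG_inj; rewrite /incl !tagG_tr; apply: tagG_op => //; rewrite tagG_tr.
by rewrite Fmap_wd.
Qed.

End Sigma.

Theorem proposition4p2 (S : bsgroupoid) (F : ufunctor S) :
  exists Phi : forall p n : nat, p <= n -> pobj F p n -> sobj F p n,
    (forall (p n : nat) (H : p <= n),
        setoid_iso (pequiv H) (@colim_eq S F p n) (Phi p n H)) /\
    (forall (q p n : nat) (Hqp : q <= p) (Hpn : p <= n) (Hqn : q <= n)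
            (h : G S p) (u : pobj F p n),
        colim_eq (Phi q n Hqn (emap Hqp Hpn h u))
                 (sigma_map Hqp h (Phi p n Hpn u))) /\
    (forall (q p n : nat) (Hqp : q <= p) (Hpn : p <= n) (Hqn : q <= n)
            (h h' : G S p),
        homeq Hqp h h' ->
        forall u : pobj F p n,
          pequiv Hqn (emap Hqp Hpn h u) (emap Hqp Hpn h' u)).
Proof.
exists (fun p n H => @sobj_of_pobj S F p n H); split; last split.
- move=> p n H; apply: setoid_iso_retraction (@pobj_of_sobj S F p n) _ _ _ _.
  + exact: sobj_of_pobj_step.
  + exact: pobj_of_sobj_step.
  + exact: sobj_of_pobjK.
  + exact: pobj_of_sobjK.
- exact: emap_sigma_map.
- exact: emap_homeq.
Qed.
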